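(* Let $m\ge2$ be an integer and $z$ a complex number with $0<|z|<1$. Then $$\sum_{k=1}^\infty\frac{\binom{2k}{m}z^{2k}}{(2k-1)(2k)(2k+1)}=\frac{1}{4z}\sum_{j=0}^{m-1}\frac{1}{m-j}\left((-1)^{m-1}\Big(\frac{z}{1+z}\Big)^{m-j}+(-1)^j\Big(\frac{z}{1-z}\Big)^{m-j}\right)$$ $$+\frac{1}{2m}\left((-1)^{m-1}\Big(1+\frac z2\Big)\Big(\frac{z}{1+z}\Big)^m-\Big(1-\frac z2\Big)\Big(\frac{z}{1-z}\Big)^m\right)$$ $$+\frac{1}{4(m-1)}\left((-1)^m(1+z)\Big(\frac{z}{1+z}\Big)^m+(1-z)\Big(\frac{z}{1-z}\Big)^m\right)+\frac{(-1)^m}{4z}\ln\Big(\frac{1+z}{1-z}\Big).$$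
   Context: $\ln$ denotes the principal branch of the logarithm. *)

From Stdlib Require Import Reals.
From Coquelicot Require Import Coquelicot.
Open Scope C_scope.

(* Principal argument in (-PI, PI] of a nonzero complex number. *)
Definition Carg (w : C) : R :=
  if Rle_dec 0 (Im w) then acos (Re w / Cmod w) else (- acos (Re w / Cmod w))%R.

Definition Cln (w : C) : C := (RtoC (ln (Cmod w)) + Ci * RtoC (Carg w))%C.

Definition sgn (n : nat) : C := RtoC ((-1) ^ n).

(* Binomial coefficient binom(n,k) as a real, with binom(n,k) = 0 for k > n
   (Stdlib's Binomial.C is not zero in that case). *)
Definition binomR (n k : nat) : R := if Nat.leb k n then Binomial.C n k else 0%R.

From Stdlib Require Import Reals Lra Lia Factorial Arith.
From Coquelicot Require Import Coquelicot.
Open Scope C_scope.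

(* Both sides are power series in z with real coefficients.  Since
   (z/(1-z))^p = sum_N C(N-1,p-1) z^N, (z/(1+z))^p is the same series at -z
   up to the sign (-1)^p, and ln((1+z)/(1-z)) = sum_N (1-(-1)^N)/N z^N, the
   coefficient of z^N in 4z times the right-hand side is (1-(-1)^N) times
     C(N-1,m)/N + (2/m) (C(N-3,m-1)/2 - C(N-2,m-1)) + (C(N-2,m-1) - C(N-3,m-1))/(m-1):
   the alternating sum over j collapses to (C(N-1,m) - (-1)^m)/N, and the
   logarithm cancels the (-1)^m.  So only odd N survive, and for N = n+3 the
   partial fraction decomposition
     2/((n+1)(n+2)(n+3)) = 1/(n+1) - 2/(n+2) + 1/(n+3)
   turns the bracket into 2 C(n+2,m)/((n+1)(n+2)(n+3)), which is 4z times the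
   left-hand side.  The logarithmic series is obtained by comparing derivatives
   along the segment from 0 to z, separately for the real and imaginary parts
   of the principal logarithm. *)

(** * Power series with real coefficients *)

Lemma RtoC_neq_0 (a : R) : a <> 0%R -> RtoC a <> 0.
Proof. intros Ha E. apply Ha. exact (f_equal fst E). Qed.

Lemma is_series_C_unique (a : nat -> C) (l l' : C) :
  is_series a l -> is_series a l' -> l = l'.
Proof. apply filterlim_locally_unique. Qed.

(* Stated at type [R] rather than at the normed-module carrier, so that [ring]
   and [field] accept the rewritten goals. *)
Lemma PS_incr_1_R_0 (a : nat -> R) : @eq R (PS_incr_1 a 0) 0.
Proof. reflexivity. Qed.

Lemma PS_incr_1_R_succ (a : nat -> R) n : @eq R (PS_incr_1 a (S n)) (a n).
Proof. reflexivity. Qed.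

Section RealCoefficients.

Variable z : C.

Lemma is_pseries_RtoC_plus (a b : nat -> R) (la lb : C) :
  is_pseries (fun n => RtoC (a n)) z la -> is_pseries (fun n => RtoC (b n)) z lb ->
  is_pseries (fun n => RtoC (a n + b n)) z (la + lb).
Proof.
  intros Ha Hb. eapply is_pseries_ext; [|exact (is_pseries_plus _ _ _ _ _ Ha Hb)].
  intro n. symmetry. apply RtoC_plus.
Qed.

Lemma is_pseries_RtoC_scal (r : R) (a : nat -> R) (l : C) :
  is_pseries (fun n => RtoC (a n)) z l ->
  is_pseries (fun n => RtoC (r * a n)) z (r * l).
Proof.
  intros Ha. eapply is_pseries_ext; [|exact (is_pseries_scal (RtoC r) _ _ _ (Cmult_comm _ _) Ha)].
  intro n. symmetry. apply RtoC_mult.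
Qed.

Lemma is_pseries_RtoC_incr_1 (a : nat -> R) (l : C) :
  is_pseries (fun n => RtoC (a n)) z l ->
  is_pseries (fun n => RtoC (PS_incr_1 a n)) z (z * l).
Proof.
  intros Ha. eapply is_pseries_ext; [|exact (is_pseries_incr_1 _ _ _ Ha)].
  now intros [|n].
Qed.

Lemma is_pseries_RtoC_sum (a : nat -> nat -> R) (l : nat -> C) (k : nat) :
  (forall j, (j <= k)%nat -> is_pseries (fun n => RtoC (a j n)) z (l j)) ->
  is_pseries (fun n => RtoC (sum_n (fun j => a j n) k)) z (sum_n l k).
Proof.
  induction k as [|k IH]; intros Ha.
  - rewrite sum_O. eapply is_pseries_ext; [|exact (Ha 0%nat (Nat.le_refl 0))].
    intro n. now rewrite sum_O.
  - rewrite sum_Sn. eapply is_pseries_ext.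
    2:{ apply is_pseries_RtoC_plus; [apply IH; auto|apply (Ha (S k))]; auto. }
    intro n. now rewrite sum_Sn.
Qed.

Lemma is_pseries_RtoC_mul_affine (r : R) (a : nat -> R) (l : C) :
  is_pseries (fun n => RtoC (a n)) z l ->
  is_pseries (fun n => RtoC (a n + r * PS_incr_1 a n)) z ((1 + r * z) * l).
Proof.
  intros Ha.
  replace ((1 + r * z) * l) with (l + r * (z * l)) by ring.
  apply is_pseries_RtoC_plus; [exact Ha|].
  apply is_pseries_RtoC_scal, is_pseries_RtoC_incr_1, Ha.
Qed.

End RealCoefficients.

Lemma is_pseries_RtoC_alt (a : nat -> R) (z l : C) :
  is_pseries (fun n => RtoC (a n)) (- z) l ->
  is_pseries (fun n => RtoC ((-1) ^ n * a n)) z l.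
Proof.
  intros Ha. unfold is_pseries in *. eapply is_series_ext; [|exact Ha].
  intro n. change (Cpow (- z) n * RtoC (a n) = Cpow z n * RtoC ((-1) ^ n * a n)).
  replace (- z) with (RtoC (-1) * z) by (apply injective_projections; simpl; ring).
  rewrite Cpow_mult_l, <- RtoC_pow, RtoC_mult. ring.
Qed.

(** * Binomial coefficients *)

Section BinomR.
Local Open Scope R_scope.

Lemma INR_fact_gt_0 n : 0 < INR (fact n).
Proof. apply lt_0_INR, lt_O_fact. Qed.

Lemma binomR_fact n k : (k <= n)%nat ->
  binomR n k = INR (fact n) / (INR (fact k) * INR (fact (n - k))).
Proof. intros Hk. unfold binomR. now rewrite (proj2 (Nat.leb_le k n) Hk). Qed.

Lemma binomR_gt n k : (n < k)%nat -> binomR n k = 0.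
Proof. intros Hk. unfold binomR. now rewrite (proj2 (Nat.leb_gt k n) Hk). Qed.

Lemma binomR_gt_0 n k : (k <= n)%nat -> 0 < binomR n k.
Proof.
  intros Hk. rewrite binomR_fact by exact Hk.
  pose proof (INR_fact_gt_0 n); pose proof (INR_fact_gt_0 k); pose proof (INR_fact_gt_0 (n - k)).
  apply Rdiv_lt_0_compat; [|apply Rmult_lt_0_compat]; assumption.
Qed.

Lemma binomR_0 n : binomR n 0 = 1.
Proof.
  rewrite binomR_fact, Nat.sub_0_r by lia. simpl. field. apply INR_fact_neq_0.
Qed.

Lemma binomR_absorb n k : INR (S k) * binomR (S n) (S k) = INR (S n) * binomR n k.
Proof.
  destruct (le_lt_dec k n).
  - rewrite !binomR_fact by lia. replace (S n - S k)%nat with (n - k)%nat by lia.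
    rewrite !fact_simpl, !mult_INR.
    pose proof (INR_fact_gt_0 n); pose proof (INR_fact_gt_0 k); pose proof (INR_fact_gt_0 (n - k)).
    pose proof (pos_INR k); pose proof (pos_INR n). rewrite !S_INR. field. lra.
  - rewrite !binomR_gt by lia. ring.
Qed.

Lemma binomR_pascal n k : binomR (S n) (S k) = binomR n k + binomR n (S k).
Proof.
  unfold binomR.
  destruct (lt_eq_lt_dec k n) as [[Hk|<-]|Hk].
  - rewrite (proj2 (Nat.leb_le (S k) (S n))), (proj2 (Nat.leb_le k n)),
      (proj2 (Nat.leb_le (S k) n)) by lia.
    now rewrite pascal.
  - rewrite Nat.leb_refl, (proj2 (Nat.leb_le k k)), (proj2 (Nat.leb_gt (S k) k)) by lia.
    rewrite !C_n_n. ring.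
  - rewrite (proj2 (Nat.leb_gt (S k) (S n))), (proj2 (Nat.leb_gt k n)),
      (proj2 (Nat.leb_gt (S k) n)) by lia.
    ring.
Qed.

Lemma binomR_1 n : binomR n 1 = INR n.
Proof.
  destruct n as [|n]; [now rewrite binomR_gt by lia|].
  pose proof (binomR_absorb n 0) as H. rewrite binomR_0 in H. simpl INR in H at 1. lra.
Qed.

Lemma binomR_succ_ratio q n :
  binomR (S (q + n)) q * INR (S n) = INR (S (q + n)) * binomR (q + n) q.
Proof.
  rewrite !binomR_fact by lia.
  replace (S (q + n) - q)%nat with (S n) by lia. replace (q + n - q)%nat with n by lia.
  rewrite !fact_simpl, !mult_INR.
  pose proof (INR_fact_gt_0 n); pose proof (INR_fact_gt_0 q); pose proof (INR_fact_gt_0 (q + n)).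
  pose proof (pos_INR n). rewrite !S_INR. field. lra.
Qed.

Lemma ex_series_binomR (q : nat) (r : R) : 0 < r < 1 ->
  ex_series (fun N => Rabs (binomR N q * r ^ N)).
Proof.
  intros Hr. apply (ex_series_incr_n _ q).
  set (a := fun n => binomR (q + n) q * r ^ (q + n)).
  assert (Ha : forall n, 0 < a n).
  { intro n. apply Rmult_lt_0_compat; [apply binomR_gt_0; lia|apply pow_lt; lra]. }
  assert (Hratio : forall n, Rabs (a (S n) / a n) = r * (1 + INR q * / INR (S n))).
  { intro n. rewrite Rabs_pos_eq by (left; apply Rdiv_lt_0_compat; auto).
    unfold a. rewrite <- plus_n_Sm. simpl pow.
    assert (0 < INR (S n)) by (apply lt_0_INR; lia).
    assert (E : binomR (S (q + n)) q = INR (S (q + n)) * binomR (q + n) q / INR (S n)).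
    { rewrite <- binomR_succ_ratio. field. lra. }
    assert (0 < binomR (q + n) q) by (apply binomR_gt_0; lia).
    pose proof (pow_lt r (q + n) ltac:(lra)).
    rewrite E, !S_INR, plus_INR. field. rewrite S_INR in *. lra. }
  apply (ex_series_DAlembert a r); [lra|intro n; specialize (Ha n); lra|].
  eapply is_lim_seq_ext; [intro n; symmetry; apply Hratio|].
  enough (L : is_lim_seq (fun n => r * (1 + INR q * / INR (S n))) (r * (1 + INR q * 0)))
    by now rewrite Rmult_0_r, Rplus_0_r, Rmult_1_r in L.
  apply is_lim_seq_mult', is_lim_seq_plus', is_lim_seq_mult'; try apply is_lim_seq_const.
  apply (is_lim_seq_incr_1 (fun n => / INR n) 0).
  replace (Finite 0) with (Rbar_inv p_infty) by reflexivity.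
  apply is_lim_seq_inv; [apply is_lim_seq_INR|discriminate].
Qed.

End BinomR.

(** * The series of [(z/(1-z))^p] and [(z/(1+z))^p] *)

Lemma one_minus_neq_0 (w : C) : (Cmod w < 1)%R -> 1 - w <> 0.
Proof.
  intros Hw E. replace w with (RtoC 1) in Hw by (rewrite <- (Cplus_0_l w), <- E; ring).
  rewrite Cmod_1 in Hw. lra.
Qed.

Lemma ex_pseries_RtoC_le (a : nat -> R) (w : C) (r : R) : (Cmod w <= r)%R ->
  ex_series (fun n => Rabs (a n * r ^ n)) -> ex_pseries (fun n => RtoC (a n)) w.
Proof.
  intros Hr Ha.
  apply (@ex_series_le C_AbsRing C_CompleteNormedModule _ (fun n => Rabs (a n * r ^ n)));
    [|exact Ha].
  intro n. change (Cmod (Cpow w n * RtoC (a n)) <= Rabs (a n * r ^ n))%R.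
  pose proof (Cmod_ge_0 w).
  rewrite Cmod_mult, Cmod_R, Cmod_pow, Rabs_mult, (Rabs_pos_eq (_ ^ _)) by (apply pow_le; lra).
  pose proof (pow_incr _ _ n (conj H Hr)). pose proof (Rabs_pos (a n)). nra.
Qed.

Lemma is_pseries_geom_C (w : C) : (Cmod w < 1)%R -> is_pseries (fun _ => RtoC 1) w (/ (1 - w)).
Proof.
  intros Hw.
  assert (Hex : ex_pseries (fun _ => RtoC 1) w).
  { apply (ex_pseries_RtoC_le (fun _ => 1%R) w (Cmod w)); [lra|].
    eapply ex_series_ext; [|apply ex_series_geom].
    - intro n. rewrite Rmult_1_l, Rabs_pos_eq; [reflexivity|apply pow_le, Cmod_ge_0].
    - rewrite Rabs_pos_eq; [exact Hw|apply Cmod_ge_0]. }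
  destruct Hex as [L HL].
  assert (Htail : is_series (fun n => Cpow w (S n) * RtoC 1) (L - 1)).
  { apply (is_series_incr_1 (fun n => scal (pow_n w n) (RtoC 1))).
    change (is_series (fun n => Cpow w n * RtoC 1) (L - 1 + 1 * 1)).
    assert (E : @eq C (L - 1 + 1 * 1) L) by ring. now rewrite E. }
  assert (Hscal : is_series (fun n => Cpow w (S n) * RtoC 1) (w * L)).
  { eapply is_series_ext; [|exact (is_series_scal w _ _ HL)].
    intro n. change (w * (Cpow w n * 1) = w * Cpow w n * 1). ring. }
  pose proof (is_series_C_unique _ _ _ Htail Hscal) as Hrec.
  replace (/ (1 - w)) with L; [exact HL|].
  pose proof (one_minus_neq_0 w Hw).
  assert (E : (1 - w) * L = 1).
  { replace ((1 - w) * L) with (L - w * L) by ring. rewrite <- Hrec. ring. }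
  apply (f_equal (Cmult (/ (1 - w)))) in E.
  now rewrite Cmult_assoc, Cinv_l, Cmult_1_l, Cmult_1_r in E.
Qed.

Lemma is_pseries_binomR (q : nat) (w : C) : (Cmod w < 1)%R ->
  is_pseries (fun N => RtoC (binomR N q)) w (Cpow w q / Cpow (1 - w) (S q)).
Proof.
  intros Hw. pose proof (one_minus_neq_0 w Hw) as Hw1.
  induction q as [|q IH].
  - eapply is_pseries_ext; [intro N; rewrite binomR_0; reflexivity|].
    replace (Cpow w 0 / Cpow (1 - w) 1) with (/ (1 - w)) by (simpl; field; exact Hw1).
    now apply is_pseries_geom_C.
  - assert (Hex : ex_pseries (fun N => RtoC (binomR N (S q))) w).
    { pose proof (Cmod_ge_0 w).
      apply (ex_pseries_RtoC_le _ w ((1 + Cmod w) / 2)); [lra|].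
      apply ex_series_binomR. lra. }
    destruct Hex as [L HL].
    pose proof (is_pseries_RtoC_mul_affine w (-1) _ _ HL) as Hdiff.
    pose proof (is_pseries_RtoC_incr_1 w _ _ IH) as Hshift.
    assert (Hrec : (1 + -1 * w) * L = w * (Cpow w q / Cpow (1 - w) (S q))).
    { eapply is_series_C_unique; [|exact Hshift].
      eapply is_pseries_ext; [|exact Hdiff]. intros [|N].
      - rewrite !PS_incr_1_R_0, binomR_gt by lia. f_equal. ring.
      - rewrite !PS_incr_1_R_succ, binomR_pascal. f_equal. ring. }
    replace L with (Cpow w (S q) / Cpow (1 - w) (S (S q))) in HL; [exact HL|].
    assert (Cpow (1 - w) q <> 0) by (apply Cpow_nz; exact Hw1).
    rewrite !Cpow_S. rewrite Cpow_S in Hrec.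
    replace (1 + -1 * w) with (1 - w) in Hrec by ring.
    apply (f_equal (Cmult (/ (1 - w)))) in Hrec.
    rewrite Cmult_assoc, Cinv_l, Cmult_1_l in Hrec by exact Hw1.
    rewrite Hrec. field. split; [assumption|exact Hw1].
Qed.

Definition ratio_coef (p : nat) : nat -> R := PS_incr_1 (fun M => binomR M (p - 1)).

Lemma is_pseries_pow_div_1_minus (p : nat) (w : C) : (1 <= p)%nat -> (Cmod w < 1)%R ->
  is_pseries (fun N => RtoC (ratio_coef p N)) w (Cpow (w / (1 - w)) p).
Proof.
  intros Hp Hw. pose proof (one_minus_neq_0 w Hw) as Hw1.
  destruct p as [|p]; [lia|]. unfold ratio_coef. rewrite Nat.sub_succ, Nat.sub_0_r.
  replace (Cpow (w / (1 - w)) (S p)) with (w * (Cpow w p / Cpow (1 - w) (S p))).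
  - exact (is_pseries_RtoC_incr_1 w _ _ (is_pseries_binomR p w Hw)).
  - unfold Cdiv. rewrite Cpow_mult_l, Cpow_inv by exact Hw1. simpl. ring.
Qed.

Lemma is_pseries_pow_div_1_plus (p : nat) (z : C) : (1 <= p)%nat -> (Cmod z < 1)%R ->
  is_pseries (fun N => RtoC ((-1) ^ (N + p) * ratio_coef p N)) z (Cpow (z / (1 + z)) p).
Proof.
  intros Hp Hz.
  assert (Hz' : (Cmod (- z) < 1)%R) by (rewrite Cmod_opp; exact Hz).
  assert (Hz1 : 1 + z <> 0).
  { intro E. apply (one_minus_neq_0 _ Hz'). rewrite <- E. ring. }
  pose proof (is_pseries_pow_div_1_minus p _ Hp Hz') as H.
  apply is_pseries_RtoC_alt, (is_pseries_RtoC_scal z ((-1) ^ p)) in H.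
  replace (Cpow (z / (1 + z)) p) with (RtoC ((-1) ^ p) * Cpow (- z / (1 - - z)) p).
  - eapply is_pseries_ext; [|exact H]. intro N. rewrite pow_add. f_equal. ring.
  - replace (- z / (1 - - z)) with (RtoC (-1) * (z / (1 + z))).
    + rewrite Cpow_mult_l, <- RtoC_pow, Cmult_assoc, <- RtoC_mult, <- Rpow_mult_distr.
      replace (-1 * -1)%R with 1%R by ring. rewrite pow1. ring.
    + replace (1 - - z) with (1 + z) by ring.
      replace (RtoC (-1)) with (- (1)) by (apply injective_projections; simpl; ring).
      field. exact Hz1.
Qed.

(** * The series of [ln((1+z)/(1-z))] *)

Lemma sum_n_Re (a : nat -> C) (n : nat) : sum_n (fun k => Re (a k)) n = Re (sum_n a n).
Proof. induction n as [|n IH]; [now rewrite !sum_O|]. now rewrite !sum_Sn, IH. Qed.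

Lemma sum_n_Im (a : nat -> C) (n : nat) : sum_n (fun k => Im (a k)) n = Im (sum_n a n).
Proof. induction n as [|n IH]; [now rewrite !sum_O|]. now rewrite !sum_Sn, IH. Qed.

Lemma is_series_Re (a : nat -> C) (l : C) :
  is_series a l -> is_series (fun n => Re (a n)) (Re l).
Proof.
  intros H. unfold is_series in *.
  eapply filterlim_ext; [intro n; symmetry; apply sum_n_Re|].
  eapply filterlim_comp; [exact H|]. destruct l as [u v]. apply (continuous_fst u v).
Qed.

Lemma is_series_Im (a : nat -> C) (l : C) :
  is_series a l -> is_series (fun n => Im (a n)) (Im l).
Proof.
  intros H. unfold is_series in *.
  eapply filterlim_ext; [intro n; symmetry; apply sum_n_Im|].
  eapply filterlim_comp; [exact H|]. destruct l as [u v]. apply (continuous_snd u v).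
Qed.

Lemma is_series_Re_Im (a : nat -> C) (r i : R) :
  is_series (fun n => Re (a n)) r -> is_series (fun n => Im (a n)) i -> is_series a (r, i).
Proof.
  intros Hr Hi. unfold is_series in *.
  assert (Hpair : filterlim (fun p : R * R => (p : C))
                    (filter_prod (locally r) (locally i)) (locally ((r, i) : C))).
  { intros P [eps Heps]. exists (ball r eps) (ball i eps).
    - now exists eps.
    - now exists eps.
    - intros u v Hu Hv. now apply Heps. }
  eapply filterlim_ext; [|exact (filterlim_comp _ _ _ _ _ _ _ _ (filterlim_pair _ _ Hr Hi) Hpair)].
  intro n. simpl. rewrite sum_n_Re, sum_n_Im. now apply injective_projections.
Qed.

Section RealPowerSeries.
Local Open Scope R_scope.

Lemma CV_radius_gt_1 (a : nat -> R) (M rho : R) : 0 < rho < 1 ->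
  (forall n, Rabs (a n) <= M * rho ^ n) -> Rbar_lt 1 (CV_radius a).
Proof.
  intros Hrho Ha.
  assert (Hle : Rbar_le (/ rho) (CV_radius a)).
  { apply (proj1 (CV_radius_bounded a)). exists M. intro n.
    rewrite Rabs_mult, pow_inv, (Rabs_pos_eq (/ _)) by (left; apply Rinv_0_lt_compat, pow_lt; lra).
    pose proof (pow_lt rho n ltac:(lra)).
    apply (Rmult_le_reg_r (rho ^ n)); [assumption|].
    rewrite Rmult_assoc, Rinv_l by lra. specialize (Ha n). lra. }
  eapply Rbar_lt_le_trans; [|exact Hle]. simpl.
  rewrite <- Rinv_1. apply Rinv_lt_contravar; lra.
Qed.

Lemma is_series_antiderivative (a : nat -> R) (F F' : R -> R) :
  Rbar_lt 1 (CV_radius a) -> a 0%nat = 0 -> F 0 = 0 ->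
  (forall t, 0 <= t <= 1 -> is_pseries (PS_derive a) t (F' t)) ->
  (forall t, 0 <= t <= 1 -> is_derive F t (F' t)) ->
  is_series a (F 1).
Proof.
  intros Hrad Ha0 HF0 Ha' HF'.
  assert (Hin : forall t, 0 <= t <= 1 -> Rbar_lt (Rabs t) (CV_radius a)).
  { intros t Ht. rewrite Rabs_pos_eq by lra.
    eapply Rbar_le_lt_trans; [|exact Hrad]. simpl. lra. }
  assert (Hconst : minus (PSeries a 0) (F 0) = minus (PSeries a 1) (F 1)).
  { apply (eq_is_derive (fun t => minus (PSeries a t) (F t))); [|lra].
    intros t Ht.
    assert (Hser : is_derive (PSeries a) t (F' t)).
    { rewrite <- (is_pseries_unique _ _ _ (Ha' t Ht)). now apply is_derive_PSeries, Hin. }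
    pose proof (is_derive_minus _ _ _ _ _ Hser (HF' t Ht)) as Hd.
    now rewrite minus_eq_zero in Hd. }
  rewrite PSeries_0, Ha0, HF0 in Hconst.
  replace (F 1) with (PSeries a 1)
    by (unfold minus, plus, opp in Hconst; simpl in Hconst; lra).
  pose proof (PSeries_correct a 1 (CV_radius_inside a 1 (Hin 1 ltac:(lra)))) as H.
  apply is_pseries_R in H. eapply is_series_ext; [|exact H].
  intro n. cbv beta. now rewrite pow1, Rmult_1_r.
Qed.

End RealPowerSeries.

Section LogCoefficients.
Local Open Scope R_scope.

Definition log_coef (n : nat) : R := (1 - (-1) ^ n) / INR n.

Lemma log_coef_0 : log_coef 0 = 0.
Proof. unfold log_coef. simpl. unfold Rdiv. ring. Qed.

Lemma Rabs_log_coef_le n : Rabs (log_coef n) <= 2.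
Proof.
  destruct n as [|n]; [rewrite log_coef_0, Rabs_R0; lra|].
  assert (1 <= INR (S n)) by (rewrite S_INR; pose proof (pos_INR n); lra).
  unfold log_coef. rewrite Rabs_div, (Rabs_pos_eq (INR _)) by lra.
  apply Rle_trans with (Rabs (1 - (-1) ^ S n)).
  - unfold Rdiv. rewrite <- (Rmult_1_r (Rabs _)) at 2.
    apply Rmult_le_compat_l; [apply Rabs_pos|].
    rewrite <- Rinv_1. apply Rinv_le_contravar; lra.
  - eapply Rle_trans; [apply Rabs_triang|]. rewrite Rabs_Ropp, pow_1_abs, Rabs_R1. lra.
Qed.

Lemma log_coef_derive n (t p : R) :
  t ^ n * (INR (S n) * (log_coef (S n) * p)) = (t ^ n + (- t) ^ n) * p.
Proof.
  assert (INR (S n) <> 0) by (apply not_0_INR; lia).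
  unfold log_coef. replace (- t) with (-1 * t) by ring.
  rewrite Rpow_mult_distr. simpl pow. field. assumption.
Qed.

Lemma ln_sqrt a : 0 < a -> ln (sqrt a) = ln a / 2.
Proof.
  intros Ha. pose proof (sqrt_lt_R0 a Ha).
  rewrite <- (sqrt_sqrt a) at 2 by lra. rewrite ln_mult by assumption. field.
Qed.

Lemma Carg_atan (w : C) : 0 < Re w -> Carg w = atan (Im w / Re w).
Proof.
  destruct w as [a b]. simpl. intros Ha. unfold Carg, Cmod; simpl.
  set (th := atan (b / a)).
  assert (Hc : a / sqrt (a ^ 2 + b ^ 2) = cos th).
  { unfold th. rewrite cos_atan.
    replace (a ^ 2 + b ^ 2) with (a * a * (1 + (b / a)²)) by (unfold Rsqr; field; lra).
    pose proof (Rle_0_sqr (b / a)).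
    rewrite sqrt_mult, sqrt_square by nra. field.
    split; [apply Rgt_not_eq, sqrt_lt_R0|]; lra. }
  pose proof (atan_bound (b / a)) as Hb. fold th in Hb. pose proof PI_RGT_0.
  replace (a * (a * 1) + b * (b * 1)) with (a ^ 2 + b ^ 2) by ring. rewrite Hc.
  destruct (Rle_dec 0 b).
  - apply acos_cos. split; [|lra]. unfold th. rewrite <- atan_0.
    destruct (Req_dec b 0) as [->|Hb0].
    + replace (0 / a) with 0 by (field; lra). lra.
    + left. apply atan_increasing, Rdiv_lt_0_compat; lra.
  - assert (th < 0).
    { unfold th. rewrite <- atan_0. apply atan_increasing.
      replace (b / a) with (- ((- b) / a)) by (field; lra).
      assert (0 < - b / a) by (apply Rdiv_lt_0_compat; lra). lra. }
    rewrite <- (cos_neg th), acos_cos by lra. ring.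
Qed.

End LogCoefficients.

Section LogSeries.

Variable z : C.
Hypothesis Hz : (Cmod z < 1)%R.

Definition log_ratio_deriv (t : R) : C := z / (1 - t * z) + z / (1 + t * z).

(* Real and imaginary parts of [ln ((1 + t z) / (1 - t z))], written so that
   [auto_derive] can differentiate them in [t]. *)
Definition log_ratio_re (t : R) : R :=
  ((ln ((1 + t * Re z) ^ 2 + (t * Im z) ^ 2) - ln ((1 - t * Re z) ^ 2 + (t * Im z) ^ 2)) / 2)%R.

Definition log_ratio_im (t : R) : R :=
  atan (2 * t * Im z / (1 - t ^ 2 * (Re z ^ 2 + Im z ^ 2))).

Local Open Scope R_scope.

Lemma Re_Im_sqr_lt_1 : Re z ^ 2 + Im z ^ 2 < 1.
Proof.
  pose proof Hz as H. unfold Cmod in H. rewrite <- sqrt_1 in H.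
  apply sqrt_lt_0_alt in H. exact H.
Qed.

Lemma log_ratio_pos t : 0 <= t <= 1 ->
  0 < 1 + t * Re z /\ 0 < 1 - t * Re z /\ 0 < 1 - t ^ 2 * (Re z ^ 2 + Im z ^ 2).
Proof.
  intros Ht. pose proof Re_Im_sqr_lt_1.
  assert (Re z ^ 2 < 1) by nra. assert (t ^ 2 <= 1) by nra.
  assert (t ^ 2 * (Re z ^ 2 + Im z ^ 2) <= Re z ^ 2 + Im z ^ 2)
    by (rewrite <- (Rmult_1_l (_ + _)) at 2; apply Rmult_le_compat_r; nra).
  repeat split; nra.
Qed.

Lemma is_derive_log_ratio_re t : 0 <= t <= 1 ->
  is_derive log_ratio_re t (Re (log_ratio_deriv t)).
Proof.
  intros Ht. destruct (log_ratio_pos t Ht) as (P1 & P2 & P3).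
  unfold log_ratio_re, log_ratio_deriv. auto_derive.
  - repeat split; nra.
  - destruct z as [x y]. simpl in *. field. split; apply Rgt_not_eq; nra.
Qed.

Lemma is_derive_log_ratio_im t : 0 <= t <= 1 ->
  is_derive log_ratio_im t (Im (log_ratio_deriv t)).
Proof.
  intros Ht. destruct (log_ratio_pos t Ht) as (P1 & P2 & P3).
  unfold log_ratio_im, log_ratio_deriv. auto_derive.
  - nra.
  - destruct z as [x y]. simpl in *. field. repeat split; apply Rgt_not_eq; nra.
Qed.

Lemma is_series_log_ratio_deriv t : 0 <= t <= 1 ->
  is_series (fun n => (RtoC (t ^ n + (- t) ^ n) * Cpow z (S n))%C) (log_ratio_deriv t).
Proof.
  intros Ht.
  assert (Hw : forall s, Rabs s <= 1 -> Cmod (s * z)%C < 1).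
  { intros s Hs. rewrite Cmod_mult, Cmod_R. pose proof (Cmod_ge_0 z). nra. }
  pose proof (is_pseries_geom_C _ (Hw t ltac:(rewrite Rabs_pos_eq; lra))) as G1.
  pose proof (is_pseries_geom_C _ (Hw (- t) ltac:(rewrite Rabs_Ropp, Rabs_pos_eq; lra))) as G2.
  pose proof (is_series_plus _ _ _ _ (is_series_scal z _ _ G1) (is_series_scal z _ _ G2)) as G.
  replace (log_ratio_deriv t) with (plus (scal z (/ (1 - t * z))%C) (scal z (/ (1 - (- t)%R * z))%C)).
  - eapply is_series_ext; [|exact G]. intro n.
    change (z * (Cpow (t * z) n * 1) + z * (Cpow ((- t)%R * z) n * 1)
            = (t ^ n + (- t) ^ n)%R * (z * Cpow z n))%C.
    rewrite !Cpow_mult_l, <- !RtoC_pow, RtoC_plus. ring.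
  - unfold log_ratio_deriv, plus, scal. simpl. unfold mult. simpl.
    replace (1 - (- t)%R * z)%C with (1 + t * z)%C by (apply injective_projections; simpl; ring).
    reflexivity.
Qed.

Lemma is_series_log_coef_proj (proj : C -> R) (F : R -> R) :
  (forall (r : R) (w : C), proj (r * w)%C = r * proj w) ->
  (forall w, Rabs (proj w) <= Cmod w) ->
  (forall a l, is_series a l -> is_series (fun n => proj (a n)) (proj l)) ->
  F 0 = 0 -> (forall t, 0 <= t <= 1 -> is_derive F t (proj (log_ratio_deriv t))) ->
  is_series (fun n => log_coef n * proj (Cpow z n)) (F 1).
Proof.
  intros Hlin Hnorm Hser HF0 HF.
  pose proof (Cmod_ge_0 z).
  apply (is_series_antiderivative _ F (fun t => proj (log_ratio_deriv t))); trivial.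
  - apply (CV_radius_gt_1 _ 2 ((1 + Cmod z) / 2)); [lra|]. intro n.
    rewrite Rabs_mult. apply Rmult_le_compat; try apply Rabs_pos; [apply Rabs_log_coef_le|].
    eapply Rle_trans; [apply Hnorm|]. rewrite Cmod_pow. apply pow_incr. lra.
  - now rewrite log_coef_0, Rmult_0_l.
  - intros t Ht. apply is_pseries_R.
    eapply is_series_ext; [|exact (Hser _ _ (is_series_log_ratio_deriv t Ht))].
    intro n. cbv beta. rewrite Hlin, <- log_coef_derive. unfold PS_derive. apply Rmult_comm.
Qed.

Lemma Cln_log_ratio : Cln ((1 + z) / (1 - z)) = (log_ratio_re 1, log_ratio_im 1).
Proof.
  destruct (log_ratio_pos 1 ltac:(lra)) as (P1 & P2 & P3).
  unfold log_ratio_re, log_ratio_im. destruct z as [x y]. cbn [Re Im fst snd] in *.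
  rewrite pow1, !Rmult_1_l, Rmult_1_r in *.
  assert (D1 : 0 < (1 + x) ^ 2 + y ^ 2) by nra.
  assert (D2 : 0 < (1 - x) ^ 2 + y ^ 2) by nra.
  assert (Hquot : ((1 + (x, y)) / (1 - (x, y)))%C
                  = ((1 - (x ^ 2 + y ^ 2)) / ((1 - x) ^ 2 + y ^ 2), 2 * y / ((1 - x) ^ 2 + y ^ 2))).
  { apply injective_projections; simpl; field; nra. }
  assert (Hre : ln (Cmod ((1 + (x, y)) / (1 - (x, y)))%C)
                = (ln ((1 + x) ^ 2 + y ^ 2) - ln ((1 - x) ^ 2 + y ^ 2)) / 2).
  { assert (E1 : Cmod (1 + (x, y)) = sqrt ((1 + x) ^ 2 + y ^ 2)) by (unfold Cmod; simpl; f_equal; ring).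
    assert (E2 : Cmod (1 - (x, y)) = sqrt ((1 - x) ^ 2 + y ^ 2)) by (unfold Cmod; simpl; f_equal; ring).
    rewrite Cmod_div, E1, E2.
    - rewrite ln_div, !ln_sqrt by (try apply sqrt_lt_R0; lra). unfold Rdiv. ring.
    - intro E. apply (f_equal fst) in E. simpl in E. lra. }
  assert (Him : Carg ((1 + (x, y)) / (1 - (x, y)))%C
                = atan (2 * y / (1 - (x ^ 2 + y ^ 2)))).
  { rewrite Carg_atan; rewrite Hquot; simpl.
    - f_equal. field. split; nra.
    - apply Rdiv_lt_0_compat; nra. }
  unfold Cln. rewrite Hre, Him. apply injective_projections; simpl; ring.
Qed.

End LogSeries.

Lemma is_pseries_Cln (z : C) : (Cmod z < 1)%R ->
  is_pseries (fun n => RtoC (log_coef n)) z (Cln ((1 + z) / (1 - z))).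
Proof.
  intros Hz. rewrite Cln_log_ratio by exact Hz. apply is_series_Re_Im.
  - eapply is_series_ext; [|apply (is_series_log_coef_proj z Hz Re)].
    + intro n. change (log_coef n * Re (Cpow z n) = Re (Cpow z n * log_coef n))%R.
      rewrite re_scal_r. ring.
    + intros r w. apply re_scal_l.
    + intro w. apply re_le_Cmod.
    + apply is_series_Re.
    + unfold log_ratio_re. rewrite !Rmult_0_l, Rminus_0_r, Rplus_0_r. unfold Rdiv. ring.
    + now apply is_derive_log_ratio_re.
  - eapply is_series_ext; [|apply (is_series_log_coef_proj z Hz Im)].
    + intro n. change (log_coef n * Im (Cpow z n) = Im (Cpow z n * log_coef n))%R.
      rewrite im_scal_r. ring.
    + intros r w. apply im_scal_l.
    + intro w. eapply Rle_trans; [apply Rmax_r|apply Rmax_Cmod].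
    + apply is_series_Im.
    + unfold log_ratio_im. rewrite !Rmult_0_r, Rmult_0_l. unfold Rdiv. rewrite Rmult_0_l. apply atan_0.
    + now apply is_derive_log_ratio_im.
Qed.

(** * Coefficients of the right-hand side *)

Section Coefficients.
Local Open Scope R_scope.

Lemma neg1_pow_cases n : (-1) ^ n = 1 \/ (-1) ^ n = -1.
Proof. induction n as [|n [IH|IH]]; simpl; [left|right|left]; try rewrite IH; ring. Qed.

Lemma sum_n_Rmult_l (a : R) (u : nat -> R) n : sum_n (fun k => a * u k) n = a * sum_n u n.
Proof. exact (sum_n_mult_l a u n). Qed.

Lemma sum_n_ext_loc_R (u v : nat -> R) n :
  (forall k, (k <= n)%nat -> u k = v k) -> sum_n u n = sum_n v n.
Proof. apply sum_n_ext_loc. Qed.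

Lemma sum_n_succ_l (u : nat -> R) n : sum_n u (S n) = u 0%nat + sum_n (fun k => u (S k)) n.
Proof. unfold sum_n. rewrite sum_Sn_m by lia. now rewrite sum_n_m_S. Qed.

Lemma sum_alt_binomR M m : (1 <= m)%nat ->
  sum_n (fun j => (-1) ^ j * binomR M (m - 1 - j) / INR (m - j)) (m - 1)
  = (binomR M m - (-1) ^ m) / INR (S M).
Proof.
  intros Hm. assert (HM : INR (S M) <> 0) by (apply not_0_INR; lia).
  induction m as [|m IH]; [lia|]. destruct m as [|m].
  - rewrite sum_O, binomR_0, binomR_1, S_INR. simpl. field. rewrite <- S_INR. exact HM.
  - pose proof (IH ltac:(lia)) as IHm. replace (S m - 1)%nat with m in IHm by lia.
    replace (S (S m) - 1)%nat with (S m) by lia. rewrite sum_n_succ_l.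
    rewrite (sum_n_ext_loc_R _ (fun j => -1 * ((-1) ^ j * binomR M (m - j) / INR (S m - j)))).
    2:{ intros j _. replace (S m - S j)%nat with (m - j)%nat by lia.
        replace (S (S m) - S j)%nat with (S m - j)%nat by lia.
        rewrite <- tech_pow_Rmult. unfold Rdiv. ring. }
    rewrite sum_n_Rmult_l, IHm, !Nat.sub_0_r.
    pose proof (binomR_absorb M (S m)) as Habs. rewrite binomR_pascal in Habs.
    assert (INR (S (S m)) <> 0) by (apply not_0_INR; lia).
    simpl pow. apply (Rmult_eq_reg_r (INR (S M) * INR (S (S m)))).
    + field_simplify; [|assumption|split; assumption]. lra.
    + apply Rmult_integral_contrapositive. now split.
Qed.

(* [rhs_coef m N] is the coefficient of [z^N] in [4 z] times the right-hand side
   of [lemma5] (see [is_pseries_rhs]); [rhs_X_coef] and [rhs_Y_coef] are those of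
   its second and third brackets. *)
Definition rhs_sum_coef (m N : nat) : R :=
  sum_n (fun j => / INR (m - j) * ((-1) ^ (m - 1) * ((-1) ^ (N + (m - j)) * ratio_coef (m - j) N)
                                   + (-1) ^ j * ratio_coef (m - j) N)) (m - 1).

Definition rhs_X_coef (m L : nat) : R :=
  let a := fun N => (-1) ^ (N + m) * ratio_coef m N in
  (-1) ^ (m - 1) * (a L + / 2 * PS_incr_1 a L)
  + -1 * (ratio_coef m L + - / 2 * PS_incr_1 (ratio_coef m) L).

Definition rhs_Y_coef (m L : nat) : R :=
  let a := fun N => (-1) ^ (N + m) * ratio_coef m N in
  (-1) ^ m * (a L + 1 * PS_incr_1 a L) + (ratio_coef m L + -1 * PS_incr_1 (ratio_coef m) L).

Definition rhs_coef (m N : nat) : R :=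
  rhs_sum_coef m N + PS_incr_1 (fun L => 2 / INR m * rhs_X_coef m L) N
  + PS_incr_1 (fun L => / INR (m - 1) * rhs_Y_coef m L) N + (-1) ^ m * log_coef N.

Lemma rhs_sum_coef_0 m : rhs_sum_coef m 0 = 0.
Proof.
  unfold rhs_sum_coef. rewrite (sum_n_ext_loc_R _ (fun _ => 0)).
  - rewrite sum_n_const. ring.
  - intros j _. unfold ratio_coef. rewrite PS_incr_1_R_0. ring.
Qed.

Lemma rhs_sum_coef_succ m M : (1 <= m)%nat ->
  rhs_sum_coef m (S M) = (1 - (-1) ^ S M) * ((binomR M m - (-1) ^ m) / INR (S M)).
Proof.
  intros Hm. unfold rhs_sum_coef. rewrite <- sum_alt_binomR, <- sum_n_Rmult_l by exact Hm.
  apply sum_n_ext_loc_R. intros j Hj. unfold ratio_coef. simpl PS_incr_1.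
  destruct (Nat.le_exists_sub j (m - 1) Hj) as (d & Hd & _).
  replace m with (S (j + d)) by lia.
  replace (S (j + d) - 1)%nat with (j + d)%nat by lia.
  replace (S (j + d) - j)%nat with (S d) by lia.
  replace (j + d - j)%nat with d by lia. rewrite Nat.sub_succ, Nat.sub_0_r.
  assert (INR (S d) <> 0) by (apply not_0_INR; lia).
  rewrite !pow_add. simpl pow.
  destruct (neg1_pow_cases j) as [-> | ->], (neg1_pow_cases M) as [-> | ->],
    (neg1_pow_cases d) as [-> | ->]; field; assumption.
Qed.

Lemma ratio_coef_0 p : ratio_coef p 0 = 0.
Proof. reflexivity. Qed.

Lemma ratio_coef_succ p M : ratio_coef p (S M) = binomR M (p - 1).
Proof. reflexivity. Qed.

Lemma rhs_X_coef_eq m L : (1 <= m)%nat ->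
  rhs_X_coef m L = (1 + (-1) ^ L) * (PS_incr_1 (ratio_coef m) L / 2 - ratio_coef m L).
Proof.
  intros Hm. destruct m as [|m]; [lia|]. unfold rhs_X_coef. rewrite Nat.sub_succ, Nat.sub_0_r.
  destruct L as [|L]; [rewrite !PS_incr_1_R_0, ratio_coef_0; field|].
  simpl PS_incr_1. rewrite !pow_add. simpl pow.
  destruct (neg1_pow_cases L) as [-> | ->], (neg1_pow_cases m) as [-> | ->]; field.
Qed.

Lemma rhs_Y_coef_eq m L :
  rhs_Y_coef m L = (1 + (-1) ^ L) * (ratio_coef m L - PS_incr_1 (ratio_coef m) L).
Proof.
  unfold rhs_Y_coef.
  destruct L as [|L]; [rewrite !PS_incr_1_R_0, ratio_coef_0; ring|].
  simpl PS_incr_1. rewrite !pow_add. simpl pow.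
  destruct (neg1_pow_cases L) as [-> | ->], (neg1_pow_cases m) as [-> | ->]; ring.
Qed.

Lemma rhs_coef_0 m : rhs_coef m 0 = 0.
Proof. unfold rhs_coef. rewrite rhs_sum_coef_0, !PS_incr_1_R_0, log_coef_0. ring. Qed.

Lemma rhs_coef_succ m M : (1 <= m)%nat ->
  rhs_coef m (S M) = (1 - (-1) ^ S M) *
    (binomR M m / INR (S M)
     + 2 / INR m * (PS_incr_1 (ratio_coef m) M / 2 - ratio_coef m M)
     + / INR (m - 1) * (ratio_coef m M - PS_incr_1 (ratio_coef m) M)).
Proof.
  intros Hm. unfold rhs_coef, log_coef. simpl PS_incr_1.
  rewrite rhs_sum_coef_succ, rhs_X_coef_eq, rhs_Y_coef_eq by exact Hm.
  replace (1 + (-1) ^ M) with (1 - (-1) ^ S M) by (simpl; ring).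
  unfold Rdiv. ring.
Qed.

Lemma binomR_partial_fractions n m : (2 <= m)%nat ->
  binomR (S (S n)) m / INR (S (S (S n)))
  + 2 / INR m * (binomR n (m - 1) / 2 - binomR (S n) (m - 1))
  + / INR (m - 1) * (binomR (S n) (m - 1) - binomR n (m - 1))
  = 2 * binomR (S (S n)) m / (INR (S n) * INR (S (S n)) * INR (S (S (S n)))).
Proof.
  intros Hm. destruct m as [|[|m]]; [lia|lia|]. rewrite Nat.sub_succ, Nat.sub_0_r.
  pose proof (binomR_absorb (S n) (S m)) as A1.
  pose proof (binomR_absorb n m) as A2.
  pose proof (binomR_pascal n m) as P.
  set (B := binomR (S (S n)) (S (S m))) in *. set (b1 := binomR (S n) (S m)) in *.
  set (b0 := binomR n (S m)) in *. set (b := binomR n m) in *.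
  rewrite !S_INR in *. pose proof (pos_INR n). pose proof (pos_INR m).
  assert (Hb1 : b1 = (INR m + 1 + 1) * B / (INR n + 1 + 1)) by (rewrite A1; field; lra).
  assert (Hb : b = (INR m + 1) * b1 / (INR n + 1)) by (rewrite A2; field; lra).
  replace b0 with (b1 - b) by lra. rewrite Hb, Hb1. field. lra.
Qed.

Lemma rhs_coef_even m k : (1 <= m)%nat -> rhs_coef m (2 * k) = 0.
Proof.
  intros Hm. destruct k as [|k]; [apply rhs_coef_0|].
  replace (2 * S k)%nat with (S (S (2 * k))) by lia.
  rewrite rhs_coef_succ by exact Hm.
  assert (Hsign : (-1) ^ S (S (2 * k)) = 1).
  { replace (S (S (2 * k))) with (2 * S k)%nat by lia. apply pow_1_even. }
  rewrite Hsign. ring.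
Qed.

Lemma rhs_coef_1 m : (1 <= m)%nat -> rhs_coef m 1 = 0.
Proof.
  intros Hm. rewrite rhs_coef_succ, binomR_gt, ratio_coef_0, PS_incr_1_R_0 by lia.
  unfold Rdiv. rewrite !Rmult_0_l. ring.
Qed.

Lemma rhs_coef_odd m n : (2 <= m)%nat ->
  rhs_coef m (S (S (S (2 * n))))
  = 4 * binomR (S (S (2 * n))) m / (INR (S (2 * n)) * INR (S (S (2 * n))) * INR (S (S (S (2 * n))))).
Proof.
  intros Hm. rewrite rhs_coef_succ, PS_incr_1_R_succ, !ratio_coef_succ by lia.
  assert (Hsign : (-1) ^ S (S (S (2 * n))) = -1).
  { replace (S (S (S (2 * n)))) with (S (2 * S n)) by lia. apply pow_1_odd. }
  rewrite Hsign, binomR_partial_fractions by exact Hm. unfold Rdiv. ring.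
Qed.

End Coefficients.

(** * The right-hand side as a power series *)

Definition rhs_sum (m : nat) (z : C) : C :=
  sum_n (fun j => / RtoC (INR (m - j)) *
                  (sgn (m - 1) * Cpow (z / (1 + z)) (m - j) + sgn j * Cpow (z / (1 - z)) (m - j)))
    (m - 1).

Definition rhs_X (m : nat) (z : C) : C :=
  sgn (m - 1) * (1 + z / 2) * Cpow (z / (1 + z)) m - (1 - z / 2) * Cpow (z / (1 - z)) m.

Definition rhs_Y (m : nat) (z : C) : C :=
  sgn m * (1 + z) * Cpow (z / (1 + z)) m + (1 - z) * Cpow (z / (1 - z)) m.

Section RhsSeries.

Variables (m : nat) (z : C).
Hypotheses (Hm : (2 <= m)%nat) (Hz : (Cmod z < 1)%R).

Lemma is_pseries_rhs_sum :
  is_pseries (fun N => RtoC (rhs_sum_coef m N)) z (rhs_sum m z).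
Proof.
  apply is_pseries_RtoC_sum. intros j Hj.
  assert (Hp : (1 <= m - j)%nat) by lia.
  rewrite <- RtoC_inv by (apply not_0_INR; lia).
  apply is_pseries_RtoC_scal, is_pseries_RtoC_plus; apply is_pseries_RtoC_scal.
  - now apply is_pseries_pow_div_1_plus.
  - now apply is_pseries_pow_div_1_minus.
Qed.

Lemma is_pseries_rhs_X :
  is_pseries (fun L => RtoC (rhs_X_coef m L)) z (rhs_X m z).
Proof.
  assert (Hm1 : (1 <= m)%nat) by lia.
  pose proof (is_pseries_RtoC_mul_affine z (/ 2) _ _ (is_pseries_pow_div_1_plus m z Hm1 Hz)) as HA.
  pose proof (is_pseries_RtoC_mul_affine z (- / 2) _ _ (is_pseries_pow_div_1_minus m z Hm1 Hz)) as HB.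
  pose proof (is_pseries_RtoC_plus z _ _ _ _ (is_pseries_RtoC_scal z ((-1) ^ (m - 1)) _ _ HA)
                (is_pseries_RtoC_scal z (-1) _ _ HB)) as H.
  rewrite RtoC_opp, !RtoC_inv in H by lra.
  unfold rhs_X, sgn. match type of H with is_pseries _ _ ?v => replace (_ - _) with v end; [exact H|].
  field.
Qed.

Lemma is_pseries_rhs_Y :
  is_pseries (fun L => RtoC (rhs_Y_coef m L)) z (rhs_Y m z).
Proof.
  assert (Hm1 : (1 <= m)%nat) by lia.
  pose proof (is_pseries_RtoC_mul_affine z 1 _ _ (is_pseries_pow_div_1_plus m z Hm1 Hz)) as HA.
  pose proof (is_pseries_RtoC_mul_affine z (-1) _ _ (is_pseries_pow_div_1_minus m z Hm1 Hz)) as HB.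
  pose proof (is_pseries_RtoC_plus z _ _ _ _ (is_pseries_RtoC_scal z ((-1) ^ m) _ _ HA) HB) as H.
  unfold rhs_Y, sgn. match type of H with is_pseries _ _ ?v => replace (_ + _) with v end; [exact H|].
  ring.
Qed.

Lemma is_pseries_rhs :
  is_pseries (fun N => RtoC (rhs_coef m N)) z
    (rhs_sum m z + z * (RtoC (2 / INR m) * rhs_X m z) + z * (RtoC (/ INR (m - 1)) * rhs_Y m z)
     + RtoC ((-1) ^ m) * Cln ((1 + z) / (1 - z))).
Proof.
  apply is_pseries_RtoC_plus; [apply is_pseries_RtoC_plus; [apply is_pseries_RtoC_plus|]|].
  - exact is_pseries_rhs_sum.
  - apply is_pseries_RtoC_incr_1, is_pseries_RtoC_scal, is_pseries_rhs_X.
  - apply is_pseries_RtoC_incr_1, is_pseries_RtoC_scal, is_pseries_rhs_Y.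
  - apply is_pseries_RtoC_scal, is_pseries_Cln, Hz.
Qed.

End RhsSeries.

Lemma sum_n_odd_subseq {G : AbelianMonoid} (a : nat -> G) :
  (forall k, a (2 * k)%nat = zero) -> a 1%nat = zero ->
  forall n, sum_n (fun k => a (S (S (S (2 * k))))) n = sum_n a (S (S (S (2 * n)))).
Proof.
  intros Heven H1 n. induction n as [|n IH].
  - assert (H0 : a 0%nat = zero) by exact (Heven 0%nat).
    assert (H2 : a 2%nat = zero) by exact (Heven 1%nat).
    rewrite sum_O, !sum_Sn, sum_O. simpl Nat.mul.
    now rewrite H0, H1, H2, !plus_zero_l.
  - rewrite sum_Sn, IH. replace (S (S (S (2 * S n)))) with (S (S (S (S (S (2 * n)))))) by lia.
    rewrite !sum_Sn. replace (S (S (S (S (2 * n))))) with (2 * S (S n))%nat by lia.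
    now rewrite Heven, plus_zero_r.
Qed.

Lemma is_series_odd_subseq {K : AbsRing} {V : NormedModule K} (a : nat -> V) (l : V) :
  (forall k, a (2 * k)%nat = zero) -> a 1%nat = zero -> is_series a l ->
  is_series (fun n => a (S (S (S (2 * n))))) l.
Proof.
  intros Heven H1 Ha. unfold is_series in *.
  eapply filterlim_ext; [intro n; symmetry; apply (sum_n_odd_subseq a Heven H1)|].
  apply (filterlim_comp _ _ _ (fun n => S (S (S (2 * n)))) (sum_n a) _ Hierarchy.eventually).
  - apply eventually_subseq. intro n. lia.
  - exact Ha.
Qed.

Lemma rhs_coef_odd_term (m n : nat) (z : C) : (2 <= m)%nat -> z <> 0 ->
  / (4 * z) * (Cpow z (S (S (S (2 * n)))) * RtoC (rhs_coef m (S (S (S (2 * n))))))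
  = RtoC (binomR (2 * S n) m) * Cpow z (2 * S n)
    / (RtoC (INR (2 * S n - 1)) * RtoC (INR (2 * S n)) * RtoC (INR (2 * S n + 1))).
Proof.
  intros Hm Hz. rewrite rhs_coef_odd by exact Hm.
  replace (2 * S n)%nat with (S (S (2 * n))) by lia.
  replace (S (S (2 * n)) - 1)%nat with (S (2 * n)) by lia.
  replace (S (S (2 * n)) + 1)%nat with (S (S (S (2 * n)))) by lia.
  assert (HINR : forall k, INR (S k) <> 0%R) by (intro k; apply not_0_INR; lia).
  rewrite RtoC_div, !RtoC_mult by (repeat apply Rmult_integral_contrapositive_currified; auto).
  rewrite (Cpow_S z (S (S (2 * n)))).
  field. repeat split; try apply RtoC_neq_0; auto.
Qed.

Theorem lemma5 (m : nat) (z : C) :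
  (2 <= m)%nat -> (0 < Cmod z < 1)%R ->
  is_series
    (fun n : nat => let k := S n in
       (RtoC (binomR (2 * k) m) * Cpow z (2 * k))
       / (RtoC (INR (2 * k - 1)) * RtoC (INR (2 * k)) * RtoC (INR (2 * k + 1))))
    ( / (4 * z) *
        sum_n (fun j : nat =>
          / RtoC (INR (m - j)) *
          (sgn (m - 1) * Cpow (z / (1 + z)) (m - j)
           + sgn j * Cpow (z / (1 - z)) (m - j))) (m - 1)
      + / (2 * RtoC (INR m)) *
        (sgn (m - 1) * (1 + z / 2) * Cpow (z / (1 + z)) m
         - (1 - z / 2) * Cpow (z / (1 - z)) m)
      + / (4 * RtoC (INR (m - 1))) *
        (sgn m * (1 + z) * Cpow (z / (1 + z)) m
         + (1 - z) * Cpow (z / (1 - z)) m)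
      + sgn m / (4 * z) * Cln ((1 + z) / (1 - z))).
Proof.
  intros Hm Hz.
  assert (Hz0 : z <> 0) by (intro E; rewrite E, Cmod_0 in Hz; lra).
  pose proof (is_pseries_rhs m z Hm (proj2 Hz)) as H.
  apply is_series_odd_subseq, (is_series_scal (/ (4 * z))) in H.
  - eapply is_series_ext; [intro n; apply (rhs_coef_odd_term m n z Hm Hz0)|].
    match type of H with is_series _ (scal ?c ?v) => replace (_ + _) with (c * v : C); [exact H|] end.
    assert (INR m <> 0%R) by (apply not_0_INR; lia).
    assert (INR (m - 1) <> 0%R) by (apply not_0_INR; lia).
    rewrite RtoC_div, RtoC_inv by assumption. unfold rhs_sum, rhs_X, rhs_Y, sgn.
    field. repeat split; try apply RtoC_neq_0; assumption.
  - intro k. change (Cpow z (2 * k) * RtoC (rhs_coef m (2 * k)) = 0).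
    rewrite rhs_coef_even by lia. ring.
  - change (Cpow z 1 * RtoC (rhs_coef m 1) = 0). rewrite rhs_coef_1 by lia. ring.
Qed.
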